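(* Let $G$ be a transitively closed directed acyclic graph on $[n]$ with $G^{un}$ connected. A subgraph $H\subseteq G$ gives a facet $Q_H$ of $\tilde Q_G$ (not containing the origin) if and only if $H^{un}$ is connected and $H=G_{L,R}$ for some partition $[n]=L\sqcup R$.
   Context: Conventions: $G$ is a directed acyclic graph with vertex set $[n]$, every edge $(i,j)$ satisfying $i<j$; subgraphs $H\subseteq G$ have $V(H)=[n]$, $E(H)\subseteq E(G)$; $^{un}$ denotes underlying undirected graph. $Q_H=\mathrm{conv}\{\mathbf e_i-\mathbf e_j:(i,j)\in E(H)\}$, $\tilde Q_G=\mathrm{conv}(\{\mathbf 0\}\cup\{\mathbf e_i-\mathbf e_j:(i,j)\in E(G)\})$ in $\mathbb R^n$. $G$ is transitively closed if $(i,j),(j,k)\in E(G)$ implies $(i,k)\in E(G)$. For disjoint $L,R\subseteq[n]$, $G_{L,R}$ is the subgraph with edge set $\{(i,j)\in E(G):i\in L,j\in R\}$. A facet is a face of codimension 1. *)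

From HB Require Import structures.
From mathcomp Require Import all_boot all_order all_algebra.
Set Implicit Arguments. Unset Strict Implicit. Unset Printing Implicit Defensive.
Import Order.TTheory GRing.Theory Num.Theory.
Local Open Scope ring_scope.

(* Vertex set [n] is represented by 'I_n; a (directed) graph on [n] is its
   edge set, a finite set of ordered pairs. *)
Definition graph (n : nat) := {set 'I_n * 'I_n}.

(* every edge (i,j) satisfies i < j (hence G is acyclic) *)
Definition dag_edges n (G : graph n) : Prop :=
  forall e, e \in G -> (val e.1 < val e.2)%N.

Definition trans_closed n (G : graph n) : Prop :=
  forall i j k : 'I_n, (i, j) \in G -> (j, k) \in G -> (i, k) \in G.

Definition und_adj n (G : graph n) : rel 'I_n :=
  fun i j => ((i, j) \in G) || ((j, i) \in G).

Definition und_connected n (G : graph n) : Prop :=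
  forall i j : 'I_n, connect (und_adj G) i j.

Definition G_LR n (G : graph n) (L : {set 'I_n}) : graph n :=
  [set e in G | (e.1 \in L) && (e.2 \in ~: L)].

Definition edge_vec (K : realFieldType) n (e : 'I_n * 'I_n) : 'rV[K]_n :=
  delta_mx 0 e.1 - delta_mx 0 e.2.

Definition Q_pts (K : realFieldType) n (H : graph n) : seq 'rV[K]_n :=
  [seq edge_vec K e | e <- enum H].
Definition Qt_pts (K : realFieldType) n (G : graph n) : seq 'rV[K]_n :=
  0 :: Q_pts K G.

Definition conv (K : realFieldType) n (s : seq 'rV[K]_n) : 'rV[K]_n -> Prop :=
  fun x => exists w : 'I_(size s) -> K,
    (forall i, 0 <= w i) /\ \sum_(i < size s) w i = 1 /\
    x = \sum_(i < size s) w i *: s`_i.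

Definition dotv (K : realFieldType) n (c x : 'rV[K]_n) : K :=
  \sum_(j < n) c 0 j * x 0 j.

(* F is a face of P : F = P ∩ {c.x = b} for a valid inequality c.x <= b
   (this includes the empty face and P itself) *)
Definition is_face (K : realFieldType) n (F P : 'rV[K]_n -> Prop) : Prop :=
  exists (c : 'rV[K]_n) (b : K),
    (forall x, P x -> dotv c x <= b) /\
    (forall x, F x <-> (P x /\ dotv c x = b)).

Definition affdim (K : realFieldType) n (s : seq 'rV[K]_n) : int :=
  match s with
  | [::] => -1
  | x0 :: _ => (\rank (\matrix_(i < size s, j < n) (s`_i - x0) 0 j))%:Z
  end.

Definition is_facet (K : realFieldType) n (t s : seq 'rV[K]_n) : Prop :=
  is_face (conv t) (conv s) /\ affdim t = affdim s - 1.

From HB Require Import structures.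
From mathcomp Require Import all_boot all_order all_algebra.
From mathcomp Require Import zify lra.
Import Order.TTheory GRing.Theory Num.Theory.
Set Implicit Arguments. Unset Strict Implicit. Unset Printing Implicit Defensive.
Local Open Scope ring_scope.

(* A linear form c is constant on Q_H iff c_i - c_j takes the same value on
   every edge of H, so dim Q_H is n minus the dimension of the space of such
   forms; for tilde Q_G these are the constants (G^un is connected), so
   dim tilde Q_G = n - 1.  If H = G_{L,R} with H^un connected, the indicator
   of L cuts out the face Q_H and the forms constant on Q_H are spanned by 1
   and 1_L, so Q_H is a facet.  Conversely, let c.x <= b cut out the facet
   Q_H.  Then b > 0, since Q_H does not contain 0 (G is acyclic); every edge
   of G tight for c lies in H, since each e_i - e_j is a vertex; H has no
   path i -> j -> k, which would give c_i - c_k = 2b > b by transitivity; and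
   H^un is connected, since otherwise 1, 1_S (S a component) and c would give
   three independent forms.  With L the set of tails of edges of H, every
   edge of H leaves L, and c - b 1_L is constant on the connected H^un, so
   every edge of G from L to its complement is tight: H = G_{L,R}. *)

Section Convexity.
Variables (K : realFieldType) (n : nat).
Implicit Types (c x y z : 'rV[K]_n) (s t : seq 'rV[K]_n).

Lemma dotvDr c x y : dotv c (x + y) = dotv c x + dotv c y.
Proof. by rewrite /dotv -big_split; apply: eq_bigr => j _; rewrite mxE mulrDr. Qed.

Lemma dotvZr c a x : dotv c (a *: x) = a * dotv c x.
Proof. by rewrite /dotv mulr_sumr; apply: eq_bigr => j _; rewrite mxE mulrCA. Qed.

Lemma dotv0r c : dotv c 0 = 0.
Proof. by rewrite -(scale0r 0) dotvZr mul0r. Qed.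

Lemma dotvBr c x y : dotv c (x - y) = dotv c x - dotv c y.
Proof. by rewrite dotvDr -scaleN1r dotvZr mulN1r. Qed.

Lemma dotv0l x : dotv 0 x = 0.
Proof. by rewrite /dotv big1 // => j _; rewrite mxE mul0r. Qed.

Lemma dotv_sumr m (w : 'I_m -> K) (f : 'I_m -> 'rV[K]_n) c :
  dotv c (\sum_(i < m) w i *: f i) = \sum_(i < m) w i * dotv c (f i).
Proof.
rewrite (big_morph (dotv c) (dotvDr c) (dotv0r c)).
by apply: eq_bigr => i _; rewrite dotvZr.
Qed.

Lemma dotv_delta c j : dotv c (delta_mx 0 j) = c 0 j.
Proof.
rewrite /dotv (bigD1 j) //= big1 => [|k /negbTE kj]; rewrite mxE.
  by rewrite !eqxx mulr1 addr0.
by rewrite eqxx kj mulr0.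
Qed.

Lemma conv_nil x : ~ conv [::] x.
Proof. by case=> w [_ [/esym/eqP + _]]; rewrite big_ord0 oner_eq0. Qed.

Lemma conv_mem s z : z \in s -> conv s z.
Proof.
rewrite -index_mem => zs; pose i0 : 'I_(size s) := Ordinal zs.
exists (fun i => (i == i0)%:R); split=> [i|]; first by rewrite ler0n.
split; rewrite (bigD1 i0) //= eqxx ?scale1r big1 ?addr0 ?nth_index -?index_mem //.
  by move=> i /negbTE ->.
by move=> i /negbTE ->; rewrite scale0r.
Qed.

(* The weight of t_j is the total weight of the s_i equal to t_j. *)
Lemma conv_of_support s t x (w : 'I_(size s) -> K) :
  (forall i, 0 <= w i) -> \sum_i w i = 1 -> x = \sum_i w i *: s`_i ->
  (forall i, w i != 0 -> s`_i \in t) -> conv t x.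
Proof.
move=> w0 w1 xE wt; pose p i := index s`_i t.
have regroup (R : Type) (idx : R) (op : Monoid.com_law idx) F :
    (forall i v, w i = 0 -> F i v = idx) ->
    \big[op/idx]_(j < size t) \big[op/idx]_(i : 'I_(size s) | p i == j) F i t`_j =
    \big[op/idx]_(i < size s) F i s`_i.
  move=> F0; rewrite (exchange_big_dep xpredT) //=; apply: eq_bigr => i _.
  have [wi0|wi] := eqVneq (w i) 0; first by rewrite big1 ?F0 // => j _; apply: F0.
  have pit : (p i < size t)%N by rewrite index_mem wt.
  rewrite (big_pred1 (Ordinal pit)) /= ?nth_index ?wt //.
exists (fun j : 'I_(size t) => \sum_(i : 'I_(size s) | p i == j) w i).
split=> [j|]; first by apply: sumr_ge0.
split; first by rewrite (regroup _ _ _ (fun i _ => w i)).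
rewrite xE -(regroup _ _ _ (fun i v => w i *: v)) => [|i v ->]; last exact: scale0r.
by apply: eq_bigr => j _; rewrite scaler_suml.
Qed.

Lemma conv_sub s t x : {subset s <= t} -> conv s x -> conv t x.
Proof.
move=> st [w [w0 [w1 xE]]]; apply: (conv_of_support w0 w1 xE) => i _.
by apply: st; rewrite mem_nth.
Qed.

Lemma conv_dotv_le s c b x :
  (forall z, z \in s -> dotv c z <= b) -> conv s x -> dotv c x <= b.
Proof.
move=> sb [w [w0 [w1 ->]]]; rewrite dotv_sumr -[b]mul1r -w1 mulr_suml.
by apply: ler_sum => i _; rewrite ler_wpM2l // sb // mem_nth.
Qed.

Lemma conv_dotv_eq s c b x :
  (forall z, z \in s -> dotv c z = b) -> conv s x -> dotv c x = b.
Proof.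
move=> sb [w [w0 [w1 ->]]]; rewrite dotv_sumr -[b]mul1r -w1 mulr_suml.
by apply: eq_bigr => i _; rewrite sb // mem_nth.
Qed.

Lemma conv_tight s c b x : (forall z, z \in s -> dotv c z <= b) ->
  conv s x -> dotv c x = b -> conv [seq z <- s | dotv c z == b] x.
Proof.
move=> sb [w [w0 [w1 xE]]] xb; apply: (conv_of_support w0 w1 xE) => i wi.
rewrite mem_filter mem_nth // andbT.
have slack0 : \sum_i w i * (b - dotv c s`_i) = 0.
  under eq_bigr do rewrite mulrBr.
  by rewrite sumrB -mulr_suml w1 mul1r -dotv_sumr -xE xb subrr.
have slack_ge0 j : true -> 0 <= w j * (b - dotv c s`_j).
  by rewrite mulr_ge0 // subr_ge0 sb // mem_nth.
have /eqP := @psumr_eq0P _ _ xpredT _ slack_ge0 slack0 i isT.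
by rewrite mulf_eq0 (negbTE wi) subr_eq0 eq_sym.
Qed.

Definition diff_mx s x0 : 'M[K]_(size s, n) :=
  \matrix_(i < size s, j < n) (s`_i - x0) 0 j.

(* The row space of the linear forms that are constant on s (given x0 \in s). *)
Definition ann s x0 := kermx (diff_mx s x0)^T.

Lemma affdim_cons x0 s : affdim (x0 :: s) = (n - \rank (ann (x0 :: s) x0))%:Z.
Proof. by rewrite /ann mxrank_ker mxrank_tr subKn // rank_leq_col. Qed.

Lemma annP s x0 y :
  (y <= ann s x0)%MS <-> (forall z, z \in s -> dotv y z = dotv y x0).
Proof.
have entry i : (y *m (diff_mx s x0)^T) 0 i = dotv y s`_i - dotv y x0.
  by rewrite mxE /dotv -sumrB; apply: eq_bigr => j _; rewrite !mxE mulrBr.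
split=> [/sub_kermxP y0 z|yc].
  rewrite -index_mem => zs; move/matrixP/(_ 0 (Ordinal zs)): y0.
  by rewrite entry mxE nth_index -?index_mem // => /eqP; rewrite subr_eq0 => /eqP.
by apply/sub_kermxP/matrixP => a i; rewrite ord1 entry mxE yc ?subrr ?mem_nth.
Qed.

Lemma mxrank_ge_biorth k m (W : 'M[K]_(m, n)) (f g : 'I_k -> 'rV[K]_n) :
  (forall i, (f i <= W)%MS) -> (forall i j, dotv (f i) (g j) = (i == j)%:R) ->
  (k <= \rank W)%N.
Proof.
move=> fW fg.
pose B : 'M[K]_(k, n) := \matrix_(i, j) f i 0 j.
pose C : 'M[K]_(n, k) := \matrix_(j, i) g i 0 j.
have BC : B *m C = 1%:M.
  by apply/matrixP => i j; rewrite !mxE -fg; apply: eq_bigr => l _; rewrite !mxE.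
have BW : (B <= W)%MS.
  apply/row_subP => i; suff -> : row i B = f i by [].
  by apply/rowP => j; rewrite !mxE.
rewrite -(mxrank1 K k) -BC.
exact: leq_trans (mxrankM_maxl _ _) (mxrankS BW).
Qed.

End Convexity.

Lemma und_connect_eq n (H : graph n) T (z : 'I_n -> T) :
  (forall e, e \in H -> z e.1 = z e.2) ->
  forall a b, connect (und_adj H) a b -> z a = z b.
Proof.
move=> Hz a b /connectP [p]; elim: p a => [|c p IH] a /=; first by move=> _ ->.
case/andP=> /orP [ac|ca] /IH pb /pb <-; first exact: Hz ac.
exact/esym/(Hz _ ca).
Qed.

Lemma und_connected0 n : und_connected (set0 : graph n) <-> (n <= 1)%N.
Proof.
split=> [conn|n1 i j].
  case: (leqP n 1) => // n1.
  have /connectP [[|c p] /=] := conn (Ordinal (ltnW n1)) (Ordinal n1).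
    by move=> _ /(congr1 val).
  by rewrite /und_adj !inE.
suff -> : i = j by exact: connect0.
by apply: ord_inj; have := ltn_ord i; have := ltn_ord j; lia.
Qed.

Section EdgePolytopes.
Variables (K : realFieldType) (n : nat).
Implicit Types (G H : graph n) (e : 'I_n * 'I_n) (y : 'rV[K]_n).

Definition ones : 'rV[K]_n := const_mx 1.
Definition indv (S : {set 'I_n}) : 'rV[K]_n := \row_j (j \in S)%:R.

Lemma indvE S j : indv S 0 j = (j \in S)%:R.
Proof. exact: mxE. Qed.

Lemma dotv_edge y e : dotv y (edge_vec K e) = y 0 e.1 - y 0 e.2.
Proof. by rewrite /edge_vec dotvBr !dotv_delta. Qed.

Lemma edge_vecE e j : edge_vec K e 0 j = (e.1 == j)%:R - (e.2 == j)%:R.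
Proof. by rewrite !mxE /= (eq_sym j) (eq_sym j). Qed.

Lemma Q_ptsP H z : reflect (exists2 e, e \in H & z = edge_vec K e) (z \in Q_pts K H).
Proof.
apply: (iffP mapP) => [] [e eH ->]; exists e => //; first by rewrite -mem_enum.
by rewrite mem_enum.
Qed.

Lemma edge_vec_Q_pts H e : e \in H -> edge_vec K e \in Q_pts K H.
Proof. by move=> eH; apply/Q_ptsP; exists e. Qed.

Lemma conv_Q_neq0 H : dag_edges H -> ~ conv (Q_pts K H) 0.
Proof.
pose d : 'rV[K]_n := \row_j (val j)%:R.
move=> dagH Q0; suff : dotv d 0 <= -1 by rewrite dotv0r; lra.
apply: conv_dotv_le Q0 => _ /Q_ptsP [e /dagH lt_e ->]; rewrite dotv_edge !mxE.
have : (val e.1).+1%:R <= (val e.2)%:R :> K by rewrite ler_nat.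
by rewrite -addn1 natrD; lra.
Qed.

(* [e_i - e_j] is a vertex: the form [x_i - x_j] attains its maximum 2 over
   the points [e_k - e_l] only at [(k, l) = (i, j)]. *)
Lemma conv_Q_edge_vec H e : e.1 != e.2 -> conv (Q_pts K H) (edge_vec K e) -> e \in H.
Proof.
move=> e12 eQ; pose u := edge_vec K e.
have part_le (a b j : 'I_n) : a != b -> ((a == j)%:R - (b == j)%:R <= 1 :> K) /\
    ((a == j)%:R - (b == j)%:R = 1 :> K -> a = j).
  move=> ab; have [<-|aj] := eqVneq a j; first by rewrite eq_sym (negbTE ab) subr0.
  by case: (b == j) => /=; (split=> [|?]; [lra | exfalso; lra]).
have e21 : e.2 != e.1 by rewrite eq_sym.
have u_le z : z \in Q_pts K H -> dotv u z <= 2.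
  case/Q_ptsP => h _ ->; rewrite dotv_edge !edge_vecE.
  by have [+ _] := part_le _ _ h.1 e12; have [+ _] := part_le _ _ h.2 e21; lra.
have uu : dotv u u = 2.
  by rewrite dotv_edge !edge_vecE !eqxx (negbTE e12) (negbTE e21) /=; lra.
have := conv_tight u_le eQ uu.
case E: [seq z <- _ | _] => [|z s]; first by move/conv_nil.
move=> _; have : z \in [seq z <- Q_pts K H | dotv u z == 2] by rewrite E mem_head.
rewrite mem_filter => /andP [/eqP uz /Q_ptsP [h hH hz]].
move: uz; rewrite hz dotv_edge !edge_vecE.
have [p1 q1] := part_le _ _ h.1 e12; have [p2 q2] := part_le _ _ h.2 e21 => uh.
have h1 : e.1 = h.1 by apply: q1; lra.
have h2 : e.2 = h.2 by apply: q2; lra.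
by rewrite [e]surjective_pairing h1 h2 -surjective_pairing.
Qed.

Lemma ann_QtP G y :
  (y <= ann (Qt_pts K G) 0)%MS <-> (forall e, e \in G -> y 0 e.1 = y 0 e.2).
Proof.
rewrite annP dotv0r; split=> [yc e eG | yc z].
  by apply/eqP; rewrite -subr_eq0 -dotv_edge yc // inE edge_vec_Q_pts ?orbT.
by rewrite inE => /predU1P [->|/Q_ptsP [e eG ->]]; rewrite ?dotv0r // dotv_edge yc ?subrr.
Qed.

Lemma affdim_Qt G : und_connected G -> affdim (Qt_pts K G) = n.-1.
Proof.
move=> connG; rewrite affdim_cons; congr Posz.
have [n0|n_gt0] := posnP n; first by move: (\rank _) => r; rewrite n0.
suff -> : \rank (ann (Qt_pts K G) 0) = 1%N by rewrite subn1.
pose v0 : 'I_n := Ordinal n_gt0.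
apply/eqP; rewrite eqn_leq; apply/andP; split.
  apply: leq_trans (rank_leq_row ones); apply: mxrankS; apply/rV_subP => y /ann_QtP yc.
  suff -> : y = y 0 v0 *: ones by apply: scalemx_sub.
  apply/rowP => j; rewrite !mxE mulr1.
  exact: (und_connect_eq (z := fun k => y 0 k) yc (connG j v0)).
apply: (@mxrank_ge_biorth _ _ 1 _ _ (fun _ => ones) (fun _ => delta_mx 0 v0)).
  by move=> _; apply/ann_QtP => e _; rewrite !mxE.
by move=> i j; rewrite !ord1 dotv_delta mxE.
Qed.

Lemma ann_QP H h0 y : (y <= ann (Q_pts K H) (edge_vec K h0))%MS <->
  (forall e, e \in H -> y 0 e.1 - y 0 e.2 = y 0 h0.1 - y 0 h0.2).
Proof.
rewrite annP dotv_edge; split=> [yc e eH | yc _ /Q_ptsP [e eH ->]].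
  by rewrite -dotv_edge yc ?edge_vec_Q_pts.
by rewrite dotv_edge yc.
Qed.

Lemma affdim_Q H h0 r : enum H = h0 :: r ->
  affdim (Q_pts K H) = (n - \rank (ann (Q_pts K H) (edge_vec K h0)))%:Z.
Proof. by rewrite /Q_pts => ->; rewrite affdim_cons. Qed.

Lemma cut_potential_eq H (L : {set 'I_n}) (y : 'I_n -> K) k :
  (forall e, e \in H -> (e.1 \in L) && (e.2 \notin L)) ->
  (forall e, e \in H -> y e.1 - y e.2 = k) ->
  forall a b, connect (und_adj H) a b -> y a - k * (a \in L)%:R = y b - k * (b \in L)%:R.
Proof.
move=> cutH yk; apply: (und_connect_eq (z := fun a : 'I_n => y a - k * (a \in L)%:R)) => e eH.
by have /andP [-> /negbTE ->] := cutH e eH; rewrite -(yk e eH) /=; lra.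
Qed.

Lemma rank_ann_cut H (L : {set 'I_n}) h0 : h0 \in H -> und_connected H ->
  (forall e, e \in H -> (e.1 \in L) && (e.2 \notin L)) ->
  \rank (ann (Q_pts K H) (edge_vec K h0)) = 2%N.
Proof.
move=> h0H connH cutH; have /andP [h01 h02] := cutH h0 h0H.
apply/eqP; rewrite eqn_leq; apply/andP; split.
  apply: (@leq_trans (\rank (ones + indv L)%MS)).
    apply: mxrankS; apply/rV_subP => y /ann_QP yc.
    pose k := y 0 h0.1 - y 0 h0.2.
    suff -> : y = (y 0 h0.1 - k) *: ones + k *: indv L.
      by apply: addmx_sub_adds; apply: scalemx_sub.
    apply/rowP => j; rewrite !mxE.
    have := cut_potential_eq (y := fun j => y 0 j) cutH yc (connH j h0.1).
    by rewrite /k h01 /=; lra.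
  apply: leq_trans (mxrank_adds_leqif ones (indv L)).1 _.
  by rewrite -[2%N]/(1 + 1)%N; apply: leq_add; apply: rank_leq_row.
apply: (@mxrank_ge_biorth _ _ 2 _ _ (fun i => [:: ones; indv L]`_i)
         (fun i => [:: delta_mx 0 h0.2; edge_vec K h0]`_i)).
  case=> [[|[|i]] Hi] //=; apply/ann_QP => e eH; rewrite ?mxE //.
  by have /andP [-> /negbTE ->] := cutH e eH; rewrite h01 (negbTE h02).
case=> [[|[|i]] Hi] //=; case=> [[|[|j]] Hj] //=;
  rewrite ?dotv_delta ?dotv_edge ?indvE ?mxE ?h01 ?(negbTE h02) /=; lra.
Qed.

Lemma rank_ann_disconnected H h0 (c : 'rV[K]_n) b a a' : h0 \in H -> b != 0 ->
  (forall e, e \in H -> c 0 e.1 - c 0 e.2 = b) -> ~~ connect (und_adj H) a a' ->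
  (3 <= \rank (ann (Q_pts K H) (edge_vec K h0)))%N.
Proof.
move=> h0H b0 cH naa'.
pose S := [set k | connect (und_adj H) a k].
have HS e : e \in H -> (e.1 \in S) = (e.2 \in S).
  move=> eH; rewrite !inE; apply/idP/idP => /connect_trans; apply; apply: connect1;
  by rewrite /und_adj -surjective_pairing eH ?orbT.
have aS : a \in S by rewrite inE connect0.
have a'S : a' \notin S by rewrite inE.
(* [g p] is [e_p] moved along [e_h0] into the kernel of [c]. *)
pose g p := delta_mx 0 p - (c 0 p / b) *: edge_vec K h0.
have hc : c 0 h0.1 - c 0 h0.2 = b := cH h0 h0H.
have hS : (h0.1 \in S)%:R - (h0.2 \in S)%:R = 0 :> K by rewrite (HS h0 h0H) subrr.
apply: (@mxrank_ge_biorth _ _ 3 _ _ (fun i => [:: ones; indv S; c]`_i)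
         (fun i => [:: g a'; g a - g a'; b^-1 *: edge_vec K h0]`_i)).
  case=> [[|[|[|i]]] Hi] //=; apply/ann_QP => e eH; rewrite ?mxE ?indvE //.
    by rewrite (HS e eH) (HS h0 h0H) !subrr.
  by rewrite !cH.
case=> [[|[|[|i]]] Hi] //=; case=> [[|[|[|j]]] Hj] //=;
  rewrite /g ?dotvBr ?dotvZr ?dotv_delta ?dotv_edge ?indvE ?mxE ?hc ?hS
    ?(negbTE a'S) ?aS /= ?divfK ?mulVf //; lra.
Qed.

End EdgePolytopes.

Arguments indv {K n} S.

Definition sources n (H : graph n) : {set 'I_n} := [set i | [exists j, (i, j) \in H]].

Lemma dag_edges_gt1 n (G : graph n) e : dag_edges G -> e \in G -> (1 < n)%N.
Proof. move=> dagG eG; have := ltn_ord e.2; have : (e.1 < e.2)%N := dagG e eG; lia. Qed.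

Lemma bool_natrB_eq1 (R : realDomainType) (p q : bool) :
  p%:R - q%:R = 1 :> R -> p && ~~ q.
Proof. by case: p; case: q => //= h; exfalso; lra. Qed.

Section Facets.
Variables (K : realFieldType) (n : nat) (G : graph n).
Hypotheses (dagG : dag_edges G) (connG : und_connected G).

Lemma is_facet_Q0 : is_facet (Q_pts K (set0 : graph n)) (Qt_pts K G) <-> (n <= 1)%N.
Proof.
have -> : Q_pts K (set0 : graph n) = [::] by rewrite /Q_pts enum_set0.
rewrite /is_facet affdim_Qt //=; split=> [[_] | n1]; first lia.
split; last lia.
exists 0, 1; split=> [x _|x]; first by rewrite dotv0l ler01.
split=> [/conv_nil //|[_]].
by rewrite dotv0l => /eqP; rewrite eq_sym oner_eq0.
Qed.

Variable H : graph n.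
Hypothesis HG : H \subset G.

Lemma cut_is_facet L h0 r : enum H = h0 :: r -> und_connected H -> H = G_LR G L ->
  is_facet (Q_pts K H) (Qt_pts K G).
Proof.
move=> enumH connH HE.
have h0H : h0 \in H by rewrite -mem_enum enumH mem_head.
have cutH e : e \in H -> (e.1 \in L) && (e.2 \notin L).
  by rewrite HE inE in_setC => /andP [].
have n2 := dag_edges_gt1 dagG (subsetP HG _ h0H).
split; last first.
  by rewrite affdim_Qt // (affdim_Q K enumH) (rank_ann_cut K h0H connH cutH); lia.
exists (indv L), 1.
have valid z : z \in Qt_pts K G -> dotv (indv L) z <= 1.
  rewrite inE => /predU1P [->|/Q_ptsP [e _ ->]]; first by rewrite dotv0r ler01.
  by rewrite dotv_edge !indvE; case: (_ \in L); case: (_ \in L) => /=; lra.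
split=> [x|x]; first exact: conv_dotv_le.
split=> [xH|[xG xb]].
  split.
    apply: conv_sub xH => _ /Q_ptsP [e eH ->].
    by rewrite inE edge_vec_Q_pts ?orbT // (subsetP HG).
  apply: conv_dotv_eq xH => _ /Q_ptsP [e /cutH /andP [e1 e2] ->].
  by rewrite dotv_edge !indvE e1 (negbTE e2) subr0.
apply: conv_sub (conv_tight valid xG xb) => z; rewrite mem_filter.
case/andP=> /eqP tight /predU1P [z0|/Q_ptsP [e eG ze]]; subst z.
  by move: tight; rewrite dotv0r => /eqP; rewrite eq_sym oner_eq0.
apply: edge_vec_Q_pts; rewrite HE inE eG in_setC /=.
by move: tight; rewrite dotv_edge !indvE => /bool_natrB_eq1.
Qed.

Section FacetToCut.
Hypothesis transG : trans_closed G.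
Variables (c : 'rV[K]_n) (b : K).
Hypothesis c_valid : forall x, conv (Qt_pts K G) x -> dotv c x <= b.
Hypothesis c_face :
  forall x, conv (Q_pts K H) x <-> conv (Qt_pts K G) x /\ dotv c x = b.

Lemma face_edge_eq e : e \in H -> c 0 e.1 - c 0 e.2 = b.
Proof.
move=> eH; rewrite -dotv_edge.
by have [] := (c_face _).1 (conv_mem (edge_vec_Q_pts K eH)).
Qed.

Lemma face_edge_le e : e \in G -> c 0 e.1 - c 0 e.2 <= b.
Proof.
move=> eG; rewrite -dotv_edge; apply/c_valid/conv_mem.
by rewrite inE edge_vec_Q_pts ?orbT.
Qed.

Lemma face_tight_edge e : e \in G -> c 0 e.1 - c 0 e.2 = b -> e \in H.
Proof.
move=> eG tight; apply: (conv_Q_edge_vec (H := H)).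
  by apply/eqP => e12; have := dagG eG; rewrite e12 ltnn.
apply/c_face; rewrite dotv_edge; split=> //.
by apply: conv_mem; rewrite inE edge_vec_Q_pts ?orbT.
Qed.

Lemma face_bound_gt0 : 0 < b.
Proof.
have conv0 : conv (Qt_pts K G) 0 by apply/conv_mem/mem_head.
rewrite lt_def -(dotv0r c) c_valid // andbT dotv0r eq_sym; apply/eqP => b0.
apply: (conv_Q_neq0 (H := H)) => [e eH|]; first exact: dagG (subsetP HG e eH).
by apply/c_face; rewrite dotv0r b0.
Qed.

Lemma face_sources_cut e : e \in H -> (e.1 \in sources H) && (e.2 \notin sources H).
Proof.
case: e => i j ijH; rewrite !inE /=; apply/andP; split; first by apply/existsP; exists j.
apply/existsP => -[k jkH].
have := face_edge_le (transG (subsetP HG _ ijH) (subsetP HG _ jkH)).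
have := face_edge_eq ijH; have := face_edge_eq jkH; have := face_bound_gt0 => /=; lra.
Qed.

Lemma face_und_connected h0 r : enum H = h0 :: r ->
  affdim (Q_pts K H) = affdim (Qt_pts K G) - 1 -> und_connected H.
Proof.
move=> enumH dimE a a'; apply/negPn/negP => naa'.
have h0H : h0 \in H by rewrite -mem_enum enumH mem_head.
have := rank_ann_disconnected h0H (lt0r_neq0 face_bound_gt0) face_edge_eq naa'.
have := rank_leq_row (ann (Q_pts K H) (edge_vec K h0)).
have n2 := dag_edges_gt1 dagG (subsetP HG _ h0H).
by move: dimE; rewrite affdim_Qt // (affdim_Q K enumH); lia.
Qed.

Lemma face_eq_G_LR : und_connected H -> H = G_LR G (sources H).
Proof.
move=> connH; apply/setP => -[i j]; rewrite inE in_setC /=; apply/idP/idP.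
  by move=> ijH; rewrite (subsetP HG _ ijH) (face_sources_cut ijH).
case/and3P => ijG iS jS; apply: face_tight_edge => //=.
have := cut_potential_eq (y := fun k => c 0 k) face_sources_cut face_edge_eq (connH i j).
by rewrite iS (negbTE jS) /=; lra.
Qed.

End FacetToCut.
End Facets.

Theorem mainTheorem16 (K : realFieldType) (n : nat) (G H : graph n) :
  dag_edges G -> trans_closed G -> und_connected G -> H \subset G ->
  (is_facet (Q_pts K H) (Qt_pts K G) <->
   (und_connected H /\ exists L : {set 'I_n}, H = G_LR G L)).
Proof.
move=> dagG transG connG HG.
case enumH: (enum H) => [|h0 r].
  have -> : H = set0 by apply/setP => e; rewrite -mem_enum enumH inE.
  rewrite is_facet_Q0 // -und_connected0; split=> [conn|[] //].
  by split=> //; exists set0; apply/setP => e; rewrite !inE andbF.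
split=> [[[c [b [c_valid c_face]]] dimE] | [connH [L HE]]].
  have connH := face_und_connected dagG connG HG c_valid c_face enumH dimE.
  split=> //; exists (sources H).
  exact: (face_eq_G_LR dagG HG transG c_valid c_face connH).
exact: (cut_is_facet K dagG connG HG enumH connH HE).
Qed.
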